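(* The least fixed point $(T^*_\infty,P^*_\infty)$ of the modified jump $\Gamma^*_{\mathscr{TP}}$ (the stage at which the modified sequence stabilizes) is consistent, i.e. $T^{*+}_\infty\cap T^{*-}_\infty=\emptyset$ and $P^{*+}_\infty\cap P^{*-}_\infty=\emptyset$, and (hence) sound$^*$, i.e. for every $\mathcal L$-sentence $\varphi$, if either $\#\varphi\in P_0^{*-}$ or $(\mathbb N,T^*_\infty,P^*_\infty)\models_{SK}\varphi\vee\neg\varphi$, then $(\mathbb N,T^*_\infty,P^*_\infty)\not\models_{SK}\mathscr P(\varphi)$.
   Context: Language. Let $\mathcal L_{\mathbb N}$ be the language of first-order Peano arithmetic and $\mathcal L=\mathcal L_{\mathbb N}\cup\{\mathrm T,\mathrm P\}$ with unary predicates $\mathrm T,\mathrm P$. $\mathcal L$-formulas are in Tait style: literals are $s=t$, $s\neq t$, $\mathrm Tt$, $\neg\mathrm Tt$, $\mathrm Pt$, $\neg\mathrm Pt$; formulas are built from literals by $\wedge,\vee,\forall,\exists$; negation of an arbitrary formula is defined by De Morgan dualities with $\neg\neg\varphi:=\varphi$. A standard Gödel numbering is fixed; $\#e$ is the code of $e$, $\ulcorner e\urcorner$ the numeral of $\#e$, $\mathrm{val}(t)$ the value of a closed term $t$, $\dot\neg$ the primitive recursive function with $\dot\neg(\#\varphi)=\#\neg\varphi$; $\mathrm T\varphi,\mathrm P\varphi$ abbreviate $\mathrm T\ulcorner\varphi\urcorner,\mathrm P\ulcorner\varphi\urcorner$. Semantics. A partial model is $(\mathbb N,T,P)$ with $\mathbb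 N$ the standard model and $T=(T^+,T^-)$, $P=(P^+,P^-)$ pairs of subsets of $\omega$. Strong Kleene satisfaction $\models_{SK}$: arithmetic literals evaluated in $\mathbb N$; $\mathrm Tt$ satisfied iff $\mathrm{val}(t)\in T^+$, $\neg\mathrm Tt$ iff $\mathrm{val}(t)\in T^-$, likewise for $\mathrm P$ with $P^\pm$; conjunction iff both, disjunction iff at least one, $\forall x\varphi(x)$ iff all numeral instances, $\exists x\varphi(x)$ iff some numeral instance. Base paradoxicality. $\mathrm{PA}[\mathrm{SK}]$ is the two-sided sequent calculus for Strong Kleene logic with identity in $\mathcal L$ (initial sequents $\varphi\Rightarrow\varphi$, cut, weakening, the rule from $\Gamma\Rightarrow\Delta,\varphi$ infer $\neg\varphi,\Gamma\Rightarrow\Delta$, usual rules for $\wedge,\vee,\forall,\exists$, reflexivity $\Rightarrow t=t$, replacement from $\Gamma\Rightarrow\Delta,\varphi(t)$ infer $\Gamma\Rightarrow\Delta,s\neq t,\varphi(s)$) plus the initial sequents of Peano arithmetic and the induction rule for all $\mathcal L$-formulas. A sentence $\varphi$ is base paradoxical iff $\mathrm{PA}[\mathrm{SK}]$ derives $\varphi\Leftrightarrow\neg\mathrm T\varphi$ and $\neg\varphi\Leftrightarrow\mathrm T\varphi$ ($\Leftrightarrow$ meaning both sequents). $B(x)$ is an $\mathcal L_{\mathbb N}$-formula defining in $\mathbb N$ the set of codes of base paradoxical sentences, and $\Pi(x):=B(x)\vee B(\dot\neg x)$. Paradoxicality clauses. Let $\mathscr P(x)$ be the $\mathcal L$-formula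 which is the disjunction of: (1) $x$ codes a sentence and $\Pi(x)$; (2) $x$ codes a sentence $\mathrm Tt$ ($t$ a closed term) and $\mathrm P(\mathrm{val}(t))$; (3) $x$ codes a sentence $\neg\mathrm Tt$ and $\mathrm P(\mathrm{val}(t))$; (4) $x$ codes a sentence $\psi\wedge\theta$ and $(\mathrm P\psi\wedge\mathrm P\theta)\vee(\mathrm T\psi\wedge\mathrm P\theta)\vee(\mathrm T\theta\wedge\mathrm P\psi)$; (5) $x$ codes a sentence $\psi\vee\theta$ and $(\mathrm P\psi\wedge\mathrm P\theta)\vee(\neg\mathrm T\psi\wedge\mathrm P\theta)\vee(\neg\mathrm T\theta\wedge\mathrm P\psi)$; (6) $x$ codes a sentence $\forall v\psi$ and $\exists y\,\mathrm P\psi(\dot y)\wedge\forall y(\mathrm P\psi(\dot y)\vee\mathrm T\psi(\dot y))$; (7) $x$ codes a sentence $\exists v\psi$ and $\exists y\,\mathrm P\psi(\dot y)\wedge\forall y(\mathrm P\psi(\dot y)\vee\neg\mathrm T\psi(\dot y))$; here $\psi(\dot y)$ is the code of the result of substituting the numeral of $y$ for $v$. Write $\mathscr P(\varphi)$ for $\mathscr P(\ulcorner\varphi\urcorner)$. Modified sequence. Let $P_0^{*-}$ be the set of codes of the sentences $\mathrm P\ulcorner\varphi\urcorner$ for $\varphi$ an $\mathcal L$-formula. Define $\Gamma^*_{\mathscr{TP}}(T,P)=\big((\{\#\varphi:(\mathbb N,T,P)\models_{SK}\varphi\},\{\#\varphi:(\mathbb N,T,P)\models_{SK}\neg\varphi\}),(\{\#\varphi:(\mathbb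 N,T,P)\models_{SK}\mathscr P(\varphi)\},\{\#\varphi:(\mathbb N,T,P)\models_{SK}\varphi\vee\neg\varphi\}\cup P_0^{*-})\big)$, $\varphi$ ranging over $\mathcal L$-sentences. Define $(T^*_0,P^*_0)=((\emptyset,\emptyset),(\emptyset,P_0^{*-}))$, $(T^*_{\xi+1},P^*_{\xi+1})=\Gamma^*_{\mathscr{TP}}(T^*_\xi,P^*_\xi)$, and $(T^*_\lambda,P^*_\lambda)=\bigcup_{\xi<\lambda}(T^*_\xi,P^*_\xi)$ (componentwise union) for limit $\lambda$; this sequence reaches the least fixed point $(T^*_\infty,P^*_\infty)$ of $\Gamma^*_{\mathscr{TP}}$. *)

From Stdlib Require Import Arith List Permutation.
Import ListNotations.

(* Terms and Tait-style formulas of L = L_N + {T, P}; de Bruijn variables *)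

Inductive term : Type :=
| tvar  : nat -> term
| tzero : term
| tsucc : term -> term
| tplus : term -> term -> term
| tmult : term -> term -> term.

Inductive form : Type :=
| feq  : term -> term -> form
| fneq : term -> term -> form
| fT   : term -> form
| fnT  : term -> form
| fP   : term -> form
| fnP  : term -> form
| fand : form -> form -> form
| for_ : form -> form -> form
| fall : form -> form              (* binds de Bruijn index 0 *)
| fex  : form -> form.

Fixpoint neg (phi : form) : form :=
  match phi with
  | feq s t => fneq s t
  | fneq s t => feq s t
  | fT t => fnT t
  | fnT t => fT t
  | fP t => fnP t
  | fnP t => fP t
  | fand a b => for_ (neg a) (neg b)
  | for_ a b => fand (neg a) (neg b)
  | fall a => fex (neg a)
  | fex a => fall (neg a)
  end.

Fixpoint closed_term (k : nat) (t : term) : Prop :=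
  match t with
  | tvar n => n < k
  | tzero => True
  | tsucc s => closed_term k s
  | tplus a b | tmult a b => closed_term k a /\ closed_term k b
  end.

Fixpoint closed_form (k : nat) (phi : form) : Prop :=
  match phi with
  | feq s t | fneq s t => closed_term k s /\ closed_term k t
  | fT t | fnT t | fP t | fnP t => closed_term k t
  | fand a b | for_ a b => closed_form k a /\ closed_form k b
  | fall a | fex a => closed_form (S k) a
  end.

Definition sentence (phi : form) : Prop := closed_form 0 phi.

Fixpoint lift_term (k : nat) (t : term) : term :=
  match t with
  | tvar n => if k <=? n then tvar (S n) else tvar n
  | tzero => tzero
  | tsucc s => tsucc (lift_term k s)
  | tplus a b => tplus (lift_term k a) (lift_term k b)
  | tmult a b => tmult (lift_term k a) (lift_term k b)
  end.

Fixpoint lift_form (k : nat) (phi : form) : form :=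
  match phi with
  | feq s t => feq (lift_term k s) (lift_term k t)
  | fneq s t => fneq (lift_term k s) (lift_term k t)
  | fT t => fT (lift_term k t)
  | fnT t => fnT (lift_term k t)
  | fP t => fP (lift_term k t)
  | fnP t => fnP (lift_term k t)
  | fand a b => fand (lift_form k a) (lift_form k b)
  | for_ a b => for_ (lift_form k a) (lift_form k b)
  | fall a => fall (lift_form (S k) a)
  | fex a => fex (lift_form (S k) a)
  end.

Fixpoint subst_term (k : nat) (s : term) (t : term) : term :=
  match t with
  | tvar n => if n =? k then s else if k <? n then tvar (pred n) else tvar n
  | tzero => tzero
  | tsucc u => tsucc (subst_term k s u)
  | tplus a b => tplus (subst_term k s a) (subst_term k s b)
  | tmult a b => tmult (subst_term k s a) (subst_term k s b)
  end.

Fixpoint subst_form (k : nat) (s : term) (phi : form) : form :=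
  match phi with
  | feq a b => feq (subst_term k s a) (subst_term k s b)
  | fneq a b => fneq (subst_term k s a) (subst_term k s b)
  | fT t => fT (subst_term k s t)
  | fnT t => fnT (subst_term k s t)
  | fP t => fP (subst_term k s t)
  | fnP t => fnP (subst_term k s t)
  | fand a b => fand (subst_form k s a) (subst_form k s b)
  | for_ a b => for_ (subst_form k s a) (subst_form k s b)
  | fall a => fall (subst_form (S k) (lift_term 0 s) a)
  | fex a => fex (subst_form (S k) (lift_term 0 s) a)
  end.

Definition inst (phi : form) (t : term) : form := subst_form 0 t phi.

Definition cpair (a b : nat) : nat := (a + b) * (a + b + 1) / 2 + b.

Fixpoint code_term (t : term) : nat :=
  match t with
  | tvar n => cpair 0 n
  | tzero => cpair 1 0
  | tsucc s => cpair 2 (code_term s)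
  | tplus a b => cpair 3 (cpair (code_term a) (code_term b))
  | tmult a b => cpair 4 (cpair (code_term a) (code_term b))
  end.

Fixpoint code (phi : form) : nat :=
  match phi with
  | feq s t => cpair 0 (cpair (code_term s) (code_term t))
  | fneq s t => cpair 1 (cpair (code_term s) (code_term t))
  | fT t => cpair 2 (code_term t)
  | fnT t => cpair 3 (code_term t)
  | fP t => cpair 4 (code_term t)
  | fnP t => cpair 5 (code_term t)
  | fand a b => cpair 6 (cpair (code a) (code b))
  | for_ a b => cpair 7 (cpair (code a) (code b))
  | fall a => cpair 8 (code a)
  | fex a => cpair 9 (code a)
  end.

Fixpoint num (n : nat) : term :=
  match n with
  | 0 => tzero
  | S m => tsucc (num m)
  end.

Definition quote (phi : form) : term := num (code phi).

Record pmodel : Type := PM {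
  Tpos : nat -> Prop; Tneg : nat -> Prop;
  Ppos : nat -> Prop; Pneg : nat -> Prop }.

Definition scons (n : nat) (e : nat -> nat) (k : nat) : nat :=
  match k with 0 => n | S k' => e k' end.

Fixpoint eval (e : nat -> nat) (t : term) : nat :=
  match t with
  | tvar n => e n
  | tzero => 0
  | tsucc s => S (eval e s)
  | tplus a b => eval e a + eval e b
  | tmult a b => eval e a * eval e b
  end.

Definition val (t : term) : nat := eval (fun _ => 0) t.

Fixpoint sat_env (M : pmodel) (e : nat -> nat) (phi : form) : Prop :=
  match phi with
  | feq s t => eval e s = eval e t
  | fneq s t => eval e s <> eval e t
  | fT t => Tpos M (eval e t)
  | fnT t => Tneg M (eval e t)
  | fP t => Ppos M (eval e t)
  | fnP t => Pneg M (eval e t)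
  | fand a b => sat_env M e a /\ sat_env M e b
  | for_ a b => sat_env M e a \/ sat_env M e b
  | fall a => forall n, sat_env M (scons n e) a
  | fex a => exists n, sat_env M (scons n e) a
  end.

Definition satSK (M : pmodel) (phi : form) : Prop := sat_env M (fun _ => 0) phi.

Definition liftL (G : list form) : list form := map (lift_form 0) G.

Inductive PASK : list form -> list form -> Prop :=
| r_init phi : PASK [phi] [phi]
| r_cut G D phi : PASK G (phi :: D) -> PASK (phi :: G) D -> PASK G D
| r_weak G D G' D' : PASK G D -> PASK (G ++ G') (D ++ D')
| r_permL G G' D : Permutation G G' -> PASK G D -> PASK G' D
| r_permR G D D' : Permutation D D' -> PASK G D -> PASK G D'
| r_contrL G D phi : PASK (phi :: phi :: G) D -> PASK (phi :: G) D
| r_contrR G D phi : PASK G (phi :: phi :: D) -> PASK G (phi :: D)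
| r_negL G D phi : PASK G (phi :: D) -> PASK (neg phi :: G) D
| r_andL1 G D a b : PASK (a :: G) D -> PASK (fand a b :: G) D
| r_andL2 G D a b : PASK (b :: G) D -> PASK (fand a b :: G) D
| r_andR G D a b : PASK G (a :: D) -> PASK G (b :: D) -> PASK G (fand a b :: D)
| r_orL G D a b : PASK (a :: G) D -> PASK (b :: G) D -> PASK (for_ a b :: G) D
| r_orR1 G D a b : PASK G (a :: D) -> PASK G (for_ a b :: D)
| r_orR2 G D a b : PASK G (b :: D) -> PASK G (for_ a b :: D)
| r_allL G D a t : PASK (inst a t :: G) D -> PASK (fall a :: G) D
(* eigenvariable = index 0, fresh for the (lifted) context *)
| r_allR G D a : PASK (liftL G) (a :: liftL D) -> PASK G (fall a :: D)
| r_exL G D a : PASK (a :: liftL G) (liftL D) -> PASK (fex a :: G) D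
| r_exR G D a t : PASK G (inst a t :: D) -> PASK G (fex a :: D)
| r_refl t : PASK [] [feq t t]
| r_repl G D a s t :
    PASK G (inst a t :: D) -> PASK G (inst a s :: fneq s t :: D)
| ax_succ0 s : PASK [feq (tsucc s) tzero] []
| ax_succinj s t : PASK [feq (tsucc s) (tsucc t)] [feq s t]
| ax_plus0 s : PASK [] [feq (tplus s tzero) s]
| ax_plusS s t : PASK [] [feq (tplus s (tsucc t)) (tsucc (tplus s t))]
| ax_mult0 s : PASK [] [feq (tmult s tzero) tzero]
| ax_multS s t : PASK [] [feq (tmult s (tsucc t)) (tplus (tmult s t) s)]
(* induction rule, for all L-formulas a(x) (x = index 0):
   from  G, a(x) => a(Sx), D   infer   G, a(0) => a(t), D *)
| r_ind G D a t :
    PASK (a :: liftL G) (subst_form 0 (tsucc (tvar 0)) (lift_form 1 a) :: liftL D) ->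
    PASK (inst a tzero :: G) (inst a t :: D).

Definition biderivable (phi psi : form) : Prop := PASK [phi] [psi] /\ PASK [psi] [phi].

Definition base_paradoxical (phi : form) : Prop :=
  sentence phi /\
  biderivable phi (neg (fT (quote phi))) /\
  biderivable (neg phi) (fT (quote phi)).

(* SK-satisfaction of the L-formula  P(#phi)  (clauses (1)-(7)),
   for a sentence phi; the arithmetical parts are evaluated in N. *)

Definition satPar (M : pmodel) (phi : form) : Prop :=
  (base_paradoxical phi \/ base_paradoxical (neg phi))
  \/ (exists t, closed_term 0 t /\ phi = fT t /\ Ppos M (val t))
  \/ (exists t, closed_term 0 t /\ phi = fnT t /\ Ppos M (val t))
  \/ (exists a b, phi = fand a b /\
        ((Ppos M (code a) /\ Ppos M (code b)) \/
         (Tpos M (code a) /\ Ppos M (code b)) \/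
         (Tpos M (code b) /\ Ppos M (code a))))
  \/ (exists a b, phi = for_ a b /\
        ((Ppos M (code a) /\ Ppos M (code b)) \/
         (Tneg M (code a) /\ Ppos M (code b)) \/
         (Tneg M (code b) /\ Ppos M (code a))))
  \/ (exists a, phi = fall a /\
        (exists y, Ppos M (code (inst a (num y)))) /\
        (forall y, Ppos M (code (inst a (num y))) \/ Tpos M (code (inst a (num y)))))
  \/ (exists a, phi = fex a /\
        (exists y, Ppos M (code (inst a (num y)))) /\
        (forall y, Ppos M (code (inst a (num y))) \/ Tneg M (code (inst a (num y))))).

Definition P0neg (x : nat) : Prop := exists phi : form, x = code (fP (quote phi)).

Definition jump (M : pmodel) : pmodel := PM
  (fun x => exists phi, sentence phi /\ x = code phi /\ satSK M phi)
  (fun x => exists phi, sentence phi /\ x = code phi /\ satSK M (neg phi))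
  (fun x => exists phi, sentence phi /\ x = code phi /\ satPar M phi)
  (fun x => (exists phi, sentence phi /\ x = code phi /\ satSK M (for_ phi (neg phi)))
            \/ P0neg x).

Definition pm_le (M N : pmodel) : Prop :=
  (forall x, Tpos M x -> Tpos N x) /\ (forall x, Tneg M x -> Tneg N x) /\
  (forall x, Ppos M x -> Ppos N x) /\ (forall x, Pneg M x -> Pneg N x).

Definition prefixed (M : pmodel) : Prop := pm_le (jump M) M.

(* Knaster-Tarski least fixed point of the (monotone) jump:
   intersection of all prefixed points *)
Definition lfp_jump : pmodel := PM
  (fun x => forall M, prefixed M -> Tpos M x)
  (fun x => forall M, prefixed M -> Tneg M x)
  (fun x => forall M, prefixed M -> Ppos M x)
  (fun x => forall M, prefixed M -> Pneg M x).

Definition consistent (M : pmodel) : Prop :=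
  (forall x, ~ (Tpos M x /\ Tneg M x)) /\ (forall x, ~ (Ppos M x /\ Pneg M x)).

Definition sound_star (M : pmodel) : Prop :=
  forall phi, sentence phi ->
    (P0neg (code phi) \/ satSK M (for_ phi (neg phi))) -> ~ satPar M phi.

(* The least fixed point lies below the union U of the transfinite iteration of
   the jump, so it suffices to show that every stage M is consistent, lies below
   its own jump, and puts no code of P+ into T+ or T-.  At such a stage every
   sentence satisfying the paradoxicality predicate is a Strong Kleene gap, by
   induction on its size: base paradoxical sentences are gaps because PA[SK] is
   sound for consistent partial models, the clauses for [T t] and [~T t] use the
   separation of P+ from T+ and T-, and the compositional clauses (4)-(7) reduce
   to gaps of smaller sentences through the Strong Kleene tables.  Hence the next
   stage again has the three properties; at limits they survive because the
   stages form a chain.  No sentence [P<phi>] is paradoxical, which takes care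
   of P_0^{*-}. *)

From Stdlib Require Import Arith Lia List Permutation Classical FunctionalExtensionality Wf_nat.
Import ListNotations.

Definition tri (s : nat) : nat := s * (s + 1) / 2.

Lemma tri_S s : tri (S s) = tri s + S s.
Proof.
  unfold tri.
  replace (S s * (S s + 1)) with (s * (s + 1) + S s * 2) by ring.
  now rewrite Nat.div_add.
Qed.

Lemma tri_mono m n : m <= n -> tri m <= tri n.
Proof. induction 1 as [|n _ IH]; [lia | rewrite tri_S; lia]. Qed.

Lemma cpair_tri a b : cpair a b = tri (a + b) + b.
Proof. reflexivity. Qed.

Lemma cpair_inj a b c d : cpair a b = cpair c d -> a = c /\ b = d.
Proof.
  rewrite !cpair_tri. intro H.
  assert (Hsum : a + b = c + d).
  { destruct (Nat.lt_trichotomy (a + b) (c + d)) as [Hlt|[Heq|Hlt]]; [| exact Heq |].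
    - pose proof (tri_mono _ _ Hlt). rewrite tri_S in *. lia.
    - pose proof (tri_mono _ _ Hlt). rewrite tri_S in *. lia. }
  rewrite Hsum in H. lia.
Qed.

Lemma code_term_inj t1 t2 : code_term t1 = code_term t2 -> t1 = t2.
Proof.
  revert t2; induction t1; destruct t2; cbn [code_term]; intros [Htag Harg]%cpair_inj;
    try discriminate Htag; try apply cpair_inj in Harg as [? ?]; f_equal; auto.
Qed.

Lemma code_inj phi1 phi2 : code phi1 = code phi2 -> phi1 = phi2.
Proof.
  revert phi2; induction phi1; destruct phi2; cbn [code]; intros [Htag Harg]%cpair_inj;
    try discriminate Htag; try apply cpair_inj in Harg as [? ?];
    f_equal; auto using code_term_inj.
Qed.

Definition ins (k v : nat) (e : nat -> nat) (i : nat) : nat :=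
  if i <? k then e i else if i =? k then v else e (pred i).

Ltac case_nat_tests := repeat match goal with
  | |- context [?a <? ?b] => destruct (Nat.ltb_spec a b)
  | |- context [?a =? ?b] => destruct (Nat.eqb_spec a b)
  | |- context [?a <=? ?b] => destruct (Nat.leb_spec a b)
  end.

Lemma ins0 v e : ins 0 v e = scons v e.
Proof. extensionality i. now destruct i. Qed.

Lemma ins_scons k v n e : ins (S k) v (scons n e) = scons n (ins k v e).
Proof.
  extensionality i.
  destruct i as [|j]; unfold ins; cbn [scons Nat.pred]; case_nat_tests; try lia; auto.
  destruct j; [lia | reflexivity].
Qed.

Lemma eval_lift k v e t : eval (ins k v e) (lift_term k t) = eval e t.
Proof.
  induction t; cbn [lift_term eval]; auto.
  unfold ins; case_nat_tests; cbn [eval]; case_nat_tests; auto; lia.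
Qed.

Lemma eval_lift0 n e t : eval (scons n e) (lift_term 0 t) = eval e t.
Proof. rewrite <- ins0. apply eval_lift. Qed.

Lemma eval_subst k s e t : eval e (subst_term k s t) = eval (ins k (eval e s) e) t.
Proof.
  induction t; cbn [subst_term eval]; auto.
  unfold ins; case_nat_tests; cbn [eval]; subst; auto; lia.
Qed.

Lemma eval_num e n : eval e (num n) = n.
Proof. induction n; cbn; auto. Qed.

Lemma sat_lift M phi : forall k v e,
  sat_env M (ins k v e) (lift_form k phi) <-> sat_env M e phi.
Proof.
  induction phi; intros k v e; cbn; rewrite ?eval_lift; try tauto.
  1, 2: now rewrite IHphi1, IHphi2.
  all: setoid_rewrite <- ins_scons; now setoid_rewrite IHphi.
Qed.

Lemma sat_lift0 M phi n e : sat_env M (scons n e) (lift_form 0 phi) <-> sat_env M e phi.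
Proof. rewrite <- ins0. apply sat_lift. Qed.

Lemma sat_subst M phi : forall k s e,
  sat_env M e (subst_form k s phi) <-> sat_env M (ins k (eval e s) e) phi.
Proof.
  induction phi; intros k s e; cbn; rewrite ?eval_subst; try tauto.
  1, 2: now rewrite IHphi1, IHphi2.
  all: setoid_rewrite IHphi; setoid_rewrite eval_lift0; now setoid_rewrite ins_scons.
Qed.

Lemma sat_inst M a t e : sat_env M e (inst a t) <-> sat_env M (scons (eval e t) e) a.
Proof. unfold inst. now rewrite sat_subst, ins0. Qed.

Lemma sat_inst_num M a y e : sat_env M e (inst a (num y)) <-> sat_env M (scons y e) a.
Proof. now rewrite sat_inst, eval_num. Qed.

Lemma neg_involutive phi : neg (neg phi) = phi.
Proof. induction phi; cbn; congruence. Qed.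

Lemma neg_subst phi : forall k s, neg (subst_form k s phi) = subst_form k s (neg phi).
Proof. induction phi; intros k s; cbn; congruence. Qed.

Lemma neg_inst a t : neg (inst a t) = inst (neg a) t.
Proof. apply neg_subst. Qed.

Fixpoint fsize (phi : form) : nat :=
  match phi with
  | fand a b | for_ a b => S (fsize a + fsize b)
  | fall a | fex a => S (fsize a)
  | _ => 1
  end.

Lemma fsize_subst phi : forall k s, fsize (subst_form k s phi) = fsize phi.
Proof. induction phi; intros k s; cbn; auto. Qed.

Lemma fsize_inst a t : fsize (inst a t) = fsize a.
Proof. apply fsize_subst. Qed.

Lemma le_Tpos M N x : pm_le M N -> Tpos M x -> Tpos N x.
Proof. intros [H _]; auto. Qed.
Lemma le_Tneg M N x : pm_le M N -> Tneg M x -> Tneg N x.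
Proof. intros [_ [H _]]; auto. Qed.
Lemma le_Ppos M N x : pm_le M N -> Ppos M x -> Ppos N x.
Proof. intros [_ [_ [H _]]]; auto. Qed.
Lemma le_Pneg M N x : pm_le M N -> Pneg M x -> Pneg N x.
Proof. intros [_ [_ [_ H]]]; auto. Qed.

Lemma pm_le_trans M N K : pm_le M N -> pm_le N K -> pm_le M K.
Proof. intros (? & ? & ? & ?) (? & ? & ? & ?); repeat split; auto. Qed.

Lemma sat_mono M N : pm_le M N -> forall e phi, sat_env M e phi -> sat_env N e phi.
Proof.
  intros (HTp & HTn & HPp & HPn) e phi; revert e; induction phi; cbn; firstorder.
Qed.

Lemma satPar_mono M N phi : pm_le M N -> satPar M phi -> satPar N phi.
Proof.
  intros (HTp & HTn & HPp & HPn) H; unfold satPar in *.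
  destruct H as [H|[H|[H|[H|[H|[H|H]]]]]].
  - now left.
  - right; left. destruct H as (t & Ht & -> & HP). eauto.
  - do 2 right; left. destruct H as (t & Ht & -> & HP). eauto.
  - do 3 right; left. destruct H as (a & b & -> & H). exists a, b. intuition.
  - do 4 right; left. destruct H as (a & b & -> & H). exists a, b. intuition.
  - do 5 right; left. destruct H as (a & -> & [y Hy] & H). exists a.
    split; [reflexivity | split; [eauto |]]. intro z. destruct (H z); auto.
  - do 6 right. destruct H as (a & -> & [y Hy] & H). exists a.
    split; [reflexivity | split; [eauto |]]. intro z. destruct (H z); auto.
Qed.

Lemma jump_mono M N : pm_le M N -> pm_le (jump M) (jump N).
Proof.
  intro Hle; repeat split; cbn; intros x.
  1-3: intros (phi & Hphi & -> & H); exists phi; unfold satSK in *; repeat split;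
         eauto using sat_mono, satPar_mono.
  intros [(phi & Hphi & -> & H) | H]; [left | now right].
  exists phi; unfold satSK in *; repeat split; auto.
  destruct H; [left | right]; eauto using sat_mono.
Qed.

Lemma consistent_sat_neg M e phi :
  consistent M -> sat_env M e phi -> sat_env M e (neg phi) -> False.
Proof.
  intros [HT HP]; revert e; induction phi; cbn; intros e; firstorder.
Qed.

Lemma Forall_sat_liftL M n e G :
  Forall (sat_env M (scons n e)) (liftL G) <-> Forall (sat_env M e) G.
Proof. unfold liftL. rewrite Forall_map, !Forall_forall. now setoid_rewrite sat_lift0. Qed.

Lemma Exists_sat_liftL M n e D :
  Exists (sat_env M (scons n e)) (liftL D) <-> Exists (sat_env M e) D.
Proof. unfold liftL. rewrite Exists_map, !Exists_exists. now setoid_rewrite sat_lift0. Qed.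

Lemma sat_ind_step M a n e :
  sat_env M (scons n e) (subst_form 0 (tsucc (tvar 0)) (lift_form 1 a)) <->
  sat_env M (scons (S n) e) a.
Proof.
  rewrite sat_subst, ins0. cbn [eval scons].
  now rewrite <- (sat_lift M a 1 n), ins_scons, ins0.
Qed.

Section SequentSoundness.

Variable M : pmodel.
Hypothesis M_consistent : consistent M.

Definition valid (G D : list form) : Prop :=
  forall e, Forall (sat_env M e) G -> Exists (sat_env M e) D.

Lemma valid_cut G D phi : valid G (phi :: D) -> valid (phi :: G) D -> valid G D.
Proof.
  intros H1 H2 e HG. specialize (H1 e HG). apply Exists_cons in H1 as [Hphi | HD].
  - apply H2. now constructor.
  - exact HD.
Qed.

Lemma valid_negL G D phi : valid G (phi :: D) -> valid (neg phi :: G) D.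
Proof.
  intros H e [Hneg HG]%Forall_cons_iff. specialize (H e HG).
  apply Exists_cons in H as [Hphi | HD].
  - exfalso. exact (consistent_sat_neg M e phi M_consistent Hphi Hneg).
  - exact HD.
Qed.

Lemma valid_allR G D a : valid (liftL G) (a :: liftL D) -> valid G (fall a :: D).
Proof.
  intros H e HG. rewrite Exists_cons.
  destruct (classic (Exists (sat_env M e) D)) as [HD | HnD]; [now right | left].
  intro n. specialize (H (scons n e)).
  rewrite Forall_sat_liftL, Exists_cons, Exists_sat_liftL in H. tauto.
Qed.

Lemma valid_exL G D a : valid (a :: liftL G) (liftL D) -> valid (fex a :: G) D.
Proof.
  intros H e [[n Ha] HG]%Forall_cons_iff. specialize (H (scons n e)).
  rewrite Forall_cons_iff, Forall_sat_liftL, Exists_sat_liftL in H. tauto.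
Qed.

Lemma valid_repl G D a s t :
  valid G (inst a t :: D) -> valid G (inst a s :: fneq s t :: D).
Proof.
  intros H e HG. specialize (H e HG). rewrite !Exists_cons, !sat_inst in *. cbn.
  destruct (Nat.eq_dec (eval e s) (eval e t)) as [Heq | Hne]; [rewrite Heq |]; tauto.
Qed.

Lemma valid_ind G D a t :
  valid (a :: liftL G) (subst_form 0 (tsucc (tvar 0)) (lift_form 1 a) :: liftL D) ->
  valid (inst a tzero :: G) (inst a t :: D).
Proof.
  intros H e [Ha0 HG]%Forall_cons_iff. rewrite Exists_cons, sat_inst.
  destruct (classic (Exists (sat_env M e) D)) as [HD | HnD]; [now right | left].
  enough (Hall : forall n, sat_env M (scons n e) a) by apply Hall.
  induction n as [|n IHn]; [now apply sat_inst in Ha0 |].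
  specialize (H (scons n e)).
  rewrite Forall_cons_iff, Forall_sat_liftL, Exists_cons, Exists_sat_liftL, sat_ind_step in H.
  tauto.
Qed.

Lemma valid_permL G G' D : Permutation G G' -> valid G D -> valid G' D.
Proof.
  intros Hperm H e HG. apply H. eapply Permutation_Forall; [symmetry |]; eassumption.
Qed.

Lemma valid_permR G D D' : Permutation D D' -> valid G D -> valid G D'.
Proof. intros Hperm H e HG. eapply Permutation_Exists; eauto. Qed.

Theorem PASK_valid G D : PASK G D -> valid G D.
Proof.
  induction 1; try solve [eauto using valid_cut, valid_negL, valid_allR, valid_exL,
                            valid_repl, valid_ind, valid_permL, valid_permR].
  all: unfold valid in *; intros e HG;
    repeat match goal with IH : forall e, Forall _ _ -> _ |- _ => specialize (IH e) end;
    rewrite ?Forall_cons_iff, ?Forall_app, ?Forall_nil_iff in *;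
    rewrite ?Exists_cons, ?Exists_app, ?Exists_nil, ?sat_inst in *; cbn in *.
  all: intuition (solve [eauto | lia]).
Qed.

End SequentSoundness.

Definition undetermined (M : pmodel) (phi : form) : Prop :=
  ~ satSK M phi /\ ~ satSK M (neg phi).

Lemma undetermined_neg M phi : undetermined M (neg phi) <-> undetermined M phi.
Proof. unfold undetermined. rewrite neg_involutive. tauto. Qed.

Section StrongKleeneGaps.

Variable M : pmodel.
Hypothesis M_consistent : consistent M.

Let sat_neg_excl phi := consistent_sat_neg M (fun _ => 0) phi M_consistent.

Lemma undetermined_and a b :
  (undetermined M a /\ undetermined M b) \/ (satSK M a /\ undetermined M b) \/
  (satSK M b /\ undetermined M a) -> undetermined M (fand a b).
Proof.
  pose proof (sat_neg_excl a); pose proof (sat_neg_excl b).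
  unfold undetermined, satSK in *; cbn. tauto.
Qed.

Lemma undetermined_or a b :
  (undetermined M a /\ undetermined M b) \/ (satSK M (neg a) /\ undetermined M b) \/
  (satSK M (neg b) /\ undetermined M a) -> undetermined M (for_ a b).
Proof.
  intro H. apply undetermined_neg, undetermined_and.
  rewrite !undetermined_neg. exact H.
Qed.

Lemma undetermined_all a :
  (exists y, undetermined M (inst a (num y))) ->
  (forall y, undetermined M (inst a (num y)) \/ satSK M (inst a (num y))) ->
  undetermined M (fall a).
Proof.
  intros [y [Hy _]] Hall. unfold undetermined, satSK in *; cbn. split.
  - intro H. apply Hy, sat_inst_num, H.
  - intros [n Hn]. rewrite <- sat_inst_num, <- neg_inst in Hn.
    destruct (Hall n) as [[_ Hneg] | Hsat]; [exact (Hneg Hn) | exact (sat_neg_excl _ Hsat Hn)].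
Qed.

Lemma undetermined_ex a :
  (exists y, undetermined M (inst a (num y))) ->
  (forall y, undetermined M (inst a (num y)) \/ satSK M (neg (inst a (num y)))) ->
  undetermined M (fex a).
Proof.
  intros Hy Hall. apply undetermined_neg, undetermined_all; setoid_rewrite <- neg_inst.
  - setoid_rewrite undetermined_neg. exact Hy.
  - intro y. rewrite undetermined_neg. apply Hall.
Qed.

End StrongKleeneGaps.

Lemma PASK_sat M phi psi : consistent M -> PASK [phi] [psi] -> satSK M phi -> satSK M psi.
Proof.
  intros HM Hd Hphi. specialize (PASK_valid M HM _ _ Hd (fun _ => 0)) as Hv.
  rewrite Forall_cons_iff, Forall_nil_iff, Exists_cons, Exists_nil in Hv.
  unfold satSK in *. tauto.
Qed.

Lemma base_paradoxical_sat M chi : consistent M -> base_paradoxical chi ->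
  (satSK M chi -> Tneg M (code chi)) /\ (satSK M (neg chi) -> Tpos M (code chi)).
Proof.
  intros HM (_ & [Hneg _] & [Hpos _]). split; intro H.
  - apply (PASK_sat M) in Hneg; [| exact HM | exact H].
    unfold satSK, quote in Hneg. cbn in Hneg. now rewrite eval_num in Hneg.
  - apply (PASK_sat M) in Hpos; [| exact HM | exact H].
    unfold satSK, quote in Hpos. cbn in Hpos. now rewrite eval_num in Hpos.
Qed.

Definition P_literal_model (b : bool) : pmodel :=
  PM (fun _ => False) (fun _ => False) (fun _ => b = true) (fun _ => b = false).

Lemma P_literal_model_consistent b : consistent (P_literal_model b).
Proof. split; intros x [H1 H2]; cbn in *; [exact H1 | congruence]. Qed.

Lemma P_literal_not_base_paradoxical q :
  ~ base_paradoxical (fP q) /\ ~ base_paradoxical (fnP q).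
Proof.
  split; intro Hb.
  - exact (proj1 (base_paradoxical_sat _ _ (P_literal_model_consistent true) Hb) eq_refl).
  - exact (proj1 (base_paradoxical_sat _ _ (P_literal_model_consistent false) Hb) eq_refl).
Qed.

Lemma not_satPar_P M q : ~ satPar M (fP q).
Proof.
  destruct (P_literal_not_base_paradoxical q) as [HP HnP].
  intros [[Hb | Hb] | H]; [exact (HP Hb) | exact (HnP Hb) |].
  repeat destruct H as [H | H]; decompose record H; discriminate.
Qed.

Section BelowJump.

Variable M : pmodel.
Hypothesis M_below_jump : pm_le M (jump M).

Lemma Tpos_code_sat a : Tpos M (code a) -> satSK M a.
Proof.
  intro H. apply M_below_jump in H as (phi & _ & Hc%code_inj & Hs). now subst.
Qed.

Lemma Tneg_code_sat_neg a : Tneg M (code a) -> satSK M (neg a).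
Proof.
  intro H. apply M_below_jump in H as (phi & _ & Hc%code_inj & Hs). now subst.
Qed.

Lemma Ppos_code_satPar a : Ppos M (code a) -> satPar M a.
Proof.
  intro H. apply M_below_jump in H as (phi & _ & Hc%code_inj & Hs). now subst.
Qed.

Lemma base_paradoxical_undetermined chi :
  consistent M -> base_paradoxical chi -> undetermined M chi.
Proof.
  intros HM Hb. destruct (base_paradoxical_sat M chi HM Hb) as [Hneg Hpos].
  split; intro H.
  - exact (consistent_sat_neg M _ chi HM H (Tneg_code_sat_neg _ (Hneg H))).
  - exact (consistent_sat_neg M _ chi HM (Tpos_code_sat _ (Hpos H)) H).
Qed.

End BelowJump.

Record sound_stage (M : pmodel) : Prop := {
  stage_consistent : consistent M;
  stage_below_jump : pm_le M (jump M);
  stage_Ppos_not_Tpos : forall x, Ppos M x -> ~ Tpos M x;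
  stage_Ppos_not_Tneg : forall x, Ppos M x -> ~ Tneg M x }.

Lemma satPar_undetermined M : sound_stage M -> forall phi, satPar M phi -> undetermined M phi.
Proof.
  intros [HM Hjump HPT HPF] phi.
  induction phi as [phi IH] using (induction_ltof1 _ fsize); unfold ltof in IH.
  assert (IHP : forall psi, fsize psi < fsize phi -> Ppos M (code psi) -> undetermined M psi)
    by eauto using Ppos_code_satPar.
  intros [[Hb | Hb] | [(t & _ & -> & Hv) | [(t & _ & -> & Hv) |
           [(a & b & -> & H) | [(a & b & -> & H) | [(a & -> & [y Hy] & Hall) |
                                                   (a & -> & [y Hy] & Hall)]]]]]].
  - exact (base_paradoxical_undetermined M Hjump phi HM Hb).
  - apply undetermined_neg, base_paradoxical_undetermined; assumption.
  - split; [apply (HPT _ Hv) | apply (HPF _ Hv)].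
  - split; [apply (HPF _ Hv) | apply (HPT _ Hv)].
  - cbn in IHP. apply undetermined_and; [exact HM |].
    destruct H as [[Ha Hb] | [[Ha Hb] | [Hb Ha]]];
      [left | right; left | right; right]; split;
      solve [apply IHP; auto; lia | apply Tpos_code_sat; assumption].
  - cbn in IHP. apply undetermined_or; [exact HM |].
    destruct H as [[Ha Hb] | [[Ha Hb] | [Hb Ha]]];
      [left | right; left | right; right]; split;
      solve [apply IHP; auto; lia | apply Tneg_code_sat_neg; assumption].
  - cbn in IHP. apply undetermined_all; [exact HM | exists y | intro z].
    + apply IHP; [rewrite fsize_inst; lia | exact Hy].
    + destruct (Hall z) as [H | H]; [left | right].
      * apply IHP; [rewrite fsize_inst; lia | exact H].
      * apply Tpos_code_sat; assumption.
  - cbn in IHP. apply undetermined_ex; [exact HM | exists y | intro z].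
    + apply IHP; [rewrite fsize_inst; lia | exact Hy].
    + destruct (Hall z) as [H | H]; [left | right].
      * apply IHP; [rewrite fsize_inst; lia | exact H].
      * apply Tneg_code_sat_neg; assumption.
Qed.

Lemma jump_sound_stage M : sound_stage M -> sound_stage (jump M).
Proof.
  intro HM. pose proof (satPar_undetermined M HM) as Hgap.
  destruct HM as [HM Hjump _ _]. constructor.
  - split; intros x [H1 H2].
    + destruct H1 as (phi & _ & -> & Hs), H2 as (phi' & _ & Hc%code_inj & Hs'). subst.
      exact (consistent_sat_neg M _ _ HM Hs Hs').
    + destruct H1 as (phi & _ & -> & Hp).
      destruct H2 as [(phi' & _ & Hc%code_inj & Hs) | [q Hc%code_inj]]; subst.
      * destruct (Hgap phi' Hp) as [Hn1 Hn2]. destruct Hs; contradiction.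
      * exact (not_satPar_P M _ Hp).
  - now apply jump_mono.
  - intros x (phi & _ & -> & Hp) (phi' & _ & Hc%code_inj & Hs). subst.
    exact (proj1 (Hgap _ Hp) Hs).
  - intros x (phi & _ & -> & Hp) (phi' & _ & Hc%code_inj & Hs). subst.
    exact (proj2 (Hgap _ Hp) Hs).
Qed.

Definition sup (F : pmodel -> Prop) : pmodel :=
  PM (fun x => exists M, F M /\ Tpos M x) (fun x => exists M, F M /\ Tneg M x)
     (fun x => exists M, F M /\ Ppos M x) (fun x => exists M, F M /\ Pneg M x).

Lemma le_sup F M : F M -> pm_le M (sup F).
Proof. intro H; repeat split; cbn; eauto. Qed.

Lemma sup_le F N : (forall M, F M -> pm_le M N) -> pm_le (sup F) N.
Proof.
  intro H; repeat split; cbn; intros x (M & HM & Hx);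
    eauto using le_Tpos, le_Tneg, le_Ppos, le_Pneg.
Qed.

Definition chain (F : pmodel -> Prop) : Prop :=
  forall M N, F M -> F N -> pm_le M N \/ pm_le N M.

Lemma sup_chain_disjoint F (p q : pmodel -> nat -> Prop) :
  chain F ->
  (forall M N x, pm_le M N -> p M x -> p N x) ->
  (forall M N x, pm_le M N -> q M x -> q N x) ->
  (forall M, F M -> forall x, p M x -> q M x -> False) ->
  forall x, (exists M, F M /\ p M x) -> (exists M, F M /\ q M x) -> False.
Proof.
  intros Hchain Hp Hq Hdisj x (M & HM & HpM) (N & HN & HqN).
  destruct (Hchain M N HM HN) as [Hle | Hle]; eauto.
Qed.

Lemma sup_sound_stage F :
  chain F -> (forall M, F M -> sound_stage M) -> sound_stage (sup F).
Proof.
  intros Hchain HF. constructor; [split | | |].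
  - intros x [H1 H2].
    apply (sup_chain_disjoint F Tpos Tneg Hchain le_Tpos le_Tneg) with x; [| exact H1 | exact H2].
    intros M HM y Hy1 Hy2. exact (proj1 (stage_consistent M (HF M HM)) y (conj Hy1 Hy2)).
  - intros x [H1 H2].
    apply (sup_chain_disjoint F Ppos Pneg Hchain le_Ppos le_Pneg) with x; [| exact H1 | exact H2].
    intros M HM y Hy1 Hy2. exact (proj2 (stage_consistent M (HF M HM)) y (conj Hy1 Hy2)).
  - apply sup_le. intros M HM. apply pm_le_trans with (jump M).
    + exact (stage_below_jump M (HF M HM)).
    + now apply jump_mono, le_sup.
  - intros x H1 H2.
    apply (sup_chain_disjoint F Ppos Tpos Hchain le_Ppos le_Tpos) with x; [| exact H1 | exact H2].
    intros M HM. exact (stage_Ppos_not_Tpos M (HF M HM)).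
  - intros x H1 H2.
    apply (sup_chain_disjoint F Ppos Tneg Hchain le_Ppos le_Tneg) with x; [| exact H1 | exact H2].
    intros M HM. exact (stage_Ppos_not_Tneg M (HF M HM)).
Qed.

Section Tower.

Variable f : pmodel -> pmodel.
Hypothesis f_mono : forall M N, pm_le M N -> pm_le (f M) (f N).

(* Stands in for the ordinal-indexed stages: the least family containing the
   empty union and closed under f and under arbitrary unions.  The tower is a
   chain by the Bourbaki-Witt argument below. *)
Inductive tower : pmodel -> Prop :=
| tower_step M : tower M -> tower (f M)
| tower_sup F : (forall M, F M -> tower M) -> tower (sup F).

Lemma tower_below_step M : tower M -> pm_le M (f M).
Proof.
  induction 1 as [M _ IH | F HF IH].
  - now apply f_mono.
  - apply sup_le. intros M HM. apply pm_le_trans with (f M); [auto |].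
    now apply f_mono, le_sup.
Qed.

Definition pm_lt (M N : pmodel) : Prop := pm_le M N /\ ~ pm_le N M.

Definition extreme (c : pmodel) : Prop :=
  forall M, tower M -> pm_lt M c -> pm_le (f M) c.

Lemma extreme_split c : tower c -> extreme c ->
  forall M, tower M -> pm_le M c \/ pm_le (f c) M.
Proof.
  intros Hc Hext M HM. induction HM as [M HM IH | F HF IH].
  - destruct IH as [HMc | HcM].
    + destruct (classic (pm_le c M)) as [HcM | HnotcM].
      * right. now apply f_mono.
      * left. apply Hext; [exact HM | split; assumption].
    + right. apply pm_le_trans with M; [exact HcM | now apply tower_below_step].
  - destruct (classic (exists M, F M /\ pm_le (f c) M)) as [(M & HM & Hle) | Hnone].
    + right. apply pm_le_trans with M; [exact Hle | now apply le_sup].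
    + left. apply sup_le. intros M HM.
      destruct (IH M HM) as [H | H]; [exact H | exfalso; eauto].
Qed.

Lemma tower_extreme c : tower c -> extreme c.
Proof.
  induction 1 as [d Hd IH | F HF IH]; intros M HM [HMc HnotcM].
  - destruct (extreme_split d Hd IH M HM) as [HMd | HdM].
    + now apply f_mono.
    + contradiction.
  - destruct (classic (exists N, F N /\ pm_lt M N)) as [(N & HN & Hlt) | Hnone].
    + apply pm_le_trans with N; [exact (IH N HN M HM Hlt) | now apply le_sup].
    + exfalso. apply HnotcM, sup_le. intros N HN.
      destruct (extreme_split N (HF N HN) (IH N HN) M HM) as [HMN | HNM].
      * apply NNPP. intro HnotNM. apply Hnone. exists N. split; [| split]; assumption.
      * apply pm_le_trans with (f N); [now apply tower_below_step, HF | exact HNM].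
Qed.

Lemma tower_chain : chain tower.
Proof.
  intros M N HM HN. destruct (extreme_split N HN (tower_extreme N HN) M HM) as [H | H].
  - now left.
  - right. apply pm_le_trans with (f N); [now apply tower_below_step | exact H].
Qed.

Lemma tower_sup_prefixed : pm_le (f (sup tower)) (sup tower).
Proof. apply le_sup, tower_step, tower_sup. auto. Qed.

End Tower.

Lemma tower_sound_stage M : tower jump M -> sound_stage M.
Proof.
  induction 1 as [M _ IH | F HF IH].
  - now apply jump_sound_stage.
  - apply sup_sound_stage; [| exact IH].
    intros M N HM HN. exact (tower_chain jump jump_mono M N (HF M HM) (HF N HN)).
Qed.

Lemma lfp_jump_least M : prefixed M -> pm_le lfp_jump M.
Proof. intro HM. repeat split; intros x Hx; exact (Hx M HM). Qed.

Lemma consistent_antimono M N : pm_le M N -> consistent N -> consistent M.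
Proof.
  intros Hle [HT HP]. split; intros x [H1 H2].
  - exact (HT x (conj (le_Tpos _ _ _ Hle H1) (le_Tneg _ _ _ Hle H2))).
  - exact (HP x (conj (le_Ppos _ _ _ Hle H1) (le_Pneg _ _ _ Hle H2))).
Qed.

Lemma sound_star_antimono M N : pm_le M N -> sound_star N -> sound_star M.
Proof.
  intros Hle HN phi Hphi Hcase Hp. apply (HN phi Hphi); [| exact (satPar_mono _ _ _ Hle Hp)].
  destruct Hcase as [H | H]; [now left | right; exact (sat_mono _ _ Hle _ _ H)].
Qed.

Lemma sound_stage_sound_star M : sound_stage M -> sound_star M.
Proof.
  intros HM phi _ [[q Hq%code_inj] | Hs] Hp.
  - subst. exact (not_satPar_P M _ Hp).
  - destruct (satPar_undetermined M HM phi Hp). destruct Hs; contradiction.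
Qed.

Theorem mainTheorem15 : consistent lfp_jump /\ sound_star lfp_jump.
Proof.
  pose (U := sup (tower jump)).
  assert (HU : sound_stage U) by (apply tower_sound_stage, tower_sup; auto).
  assert (Hle : pm_le lfp_jump U) by exact (lfp_jump_least U (tower_sup_prefixed jump)).
  split.
  - exact (consistent_antimono _ _ Hle (stage_consistent U HU)).
  - exact (sound_star_antimono _ _ Hle (sound_stage_sound_star U HU)).
Qed.
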